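(* Let $X$ and $Y$ be nonempty compact metric spaces. Then $d^{us}_{GH}(X,Y)=d_{GH}(X,Y)$.
   Context: For a metric space, $|xy|$ denotes distance. A set-valued map $f:X\rightrightarrows Y$ assigns to each $x\in X$ a nonempty $f(x)\subseteq Y$ and is identified with its graph. A correspondence between $X$ and $Y$ is a subset $R\subseteq X\times Y$ whose projections to $X$ and to $Y$ are both surjective, regarded as the set-valued map $x\mapsto R(x)=\{y:(x,y)\in R\}$; $R^{-1}=\{(y,x):(x,y)\in R\}$; $\mathcal R(X,Y)$ is the set of all correspondences. The distortion of a nonempty $\sigma\subseteq X\times Y$ is $\operatorname{dis}\sigma=\sup\{||xx'|-|yy'||:(x,y),(x',y')\in\sigma\}\in[0,\infty]$, and $d_{GH}(X,Y)=\frac12\inf\{\operatorname{dis}R:R\in\mathcal R(X,Y)\}$. A set-valued map $f$ is upper semicontinuous if for every $x$ and every open $U\supseteq f(x)$ there is a neighborhood $V$ of $x$ with $f(x')\subseteq U$ for all $x'\in V$. $\mathcal R_{us}(X,Y)$ is the set of $R\in\mathcal R(X,Y)$ with both $R$ and $R^{-1}$ upper semicontinuous, and $d^{us}_{GH}(X,Y)=\frac12\inf\{\operatorname{dis}R:R\in\mathcal R_{us}(X,Y)\}$. *)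

From HB Require Import structures.
From mathcomp Require Import all_boot all_order all_algebra.
From mathcomp Require Import classical_sets boolp reals ereal Rstruct.
Set Implicit Arguments. Unset Strict Implicit. Unset Printing Implicit Defensive.
Import Order.TTheory GRing.Theory Num.Theory.
Local Open Scope classical_set_scope.
Local Open Scope ring_scope.

Notation R := Rdefinitions.R.

Record metric (X : Type) := Metric {
  mdist :> X -> X -> R;
  mdist_eq0 : forall x y, mdist x y = 0 <-> x = y;
  mdist_sym : forall x y, mdist x y = mdist y x;
  mdist_tri : forall x y z, mdist x z <= mdist x y + mdist y z }.

Definition mopen (X : Type) (dX : metric X) (U : set X) : Prop :=
  forall x, U x -> exists2 e : R, 0 < e & forall y, dX x y < e -> U y.

Definition mcompact (X : Type) (dX : metric X) : Prop :=
  forall (I : Type) (U : I -> set X),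
    (forall i, mopen dX (U i)) -> (forall x, exists i, U i x) ->
    exists s : list I, forall x, exists i, List.In i s /\ U i x.

Definition correspondence (X Y : Type) (C : set (X * Y)) : Prop :=
  (forall x, exists y, C (x, y)) /\ (forall y, exists x, C (x, y)).

Definition dis (X Y : Type) (dX : metric X) (dY : metric Y) (s : set (X * Y))
  : \bar R :=
  ereal_sup [set r : \bar R | exists p q, s p /\ s q /\
               r = (`|dX p.1 q.1 - dY p.2 q.2|)%:E].

Definition usc (X Y : Type) (dX : metric X) (dY : metric Y) (f : X -> set Y)
  : Prop :=
  forall x (U : set Y), mopen dY U -> f x `<=` U ->
    exists V : set X, [/\ mopen dX V, V x & forall x', V x' -> f x' `<=` U].

Definition corr_map (X Y : Type) (C : set (X * Y)) : X -> set Y :=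
  fun x y => C (x, y).
Definition corr_inv_map (X Y : Type) (C : set (X * Y)) : Y -> set X :=
  fun y x => C (x, y).

Definition dGH (X Y : Type) (dX : metric X) (dY : metric Y) : \bar R :=
  ((2 : R)^-1)%:E * ereal_inf [set dis dX dY C | C in correspondence (X:=X) (Y:=Y)].

Definition correspondence_us (X Y : Type) (dX : metric X) (dY : metric Y)
  (C : set (X * Y)) : Prop :=
  [/\ correspondence C, usc dX dY (corr_map C) & usc dY dX (corr_inv_map C)].

Definition dGH_us (X Y : Type) (dX : metric X) (dY : metric Y) : \bar R :=
  ((2 : R)^-1)%:E * ereal_inf [set dis dX dY C | C in correspondence_us dX dY].

From mathcomp Require Import all_boot all_order all_algebra.
From mathcomp Require Import classical_sets boolp reals ereal Rstruct.
From mathcomp Require Import lra.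
Set Implicit Arguments. Unset Strict Implicit. Unset Printing Implicit Defensive.
Import Order.TTheory GRing.Theory Num.Theory.
Local Open Scope classical_set_scope.
Local Open Scope ring_scope.

(* Replacing a correspondence by its closure in X x Y keeps it a correspondence
   and does not increase its distortion, since the distortion is a supremum of
   expressions continuous in both points.  A closed relation into a compact
   space is upper semicontinuous: the complement of an open U is compact, and
   a finite cover of it by balls avoiding the relation near x gives a common
   neighbourhood of x.  So every correspondence is dominated, in distortion,
   by an upper semicontinuous one. *)

Section MetricFacts.
Variables (X : Type) (dX : metric X).

Lemma mdist_xx x : dX x x = 0.
Proof. by apply/(mdist_eq0 dX). Qed.

Lemma mdist_sub_le x y x' y' : `|dX x y - dX x' y'| <= dX x x' + dX y y'.
Proof.
have := mdist_tri dX x x' y; have := mdist_tri dX x' y' y.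
have := mdist_tri dX x' x y'; have := mdist_tri dX x y y'.
rewrite (mdist_sym dX x' x) (mdist_sym dX y' y) ler_norml; move=> *.
by apply/andP; split; lra.
Qed.

Lemma mopen_ball x (e : R) : mopen dX (fun y => dX x y < e).
Proof.
move=> y xy; exists (e - dX x y); first lra.
by move=> z yz; have := mdist_tri dX x y z; lra.
Qed.

End MetricFacts.

Lemma finite_pos_lower_bound (I : Type) (r : I -> R) (s : list I) :
  (forall i, 0 < r i) -> exists2 d : R, 0 < d & forall i, List.In i s -> d <= r i.
Proof.
move=> r_gt0; elim: s => [|a s [d d_gt0 le_d]]; first by exists 1 => // i [].
have [d_le|lt_d] := leP d (r a).
- by exists d => // i [<-|/le_d].
- exists (r a) => // i [<-|/le_d] // /(lt_le_trans lt_d); exact: ltW.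
Qed.

Lemma mcompact_cover_compl (Y : Type) (dY : metric Y) (U : set Y) (E : Y -> R) :
  mcompact dY -> mopen dY U -> (forall y, 0 < E y) ->
  exists s : list Y, forall z, ~ U z ->
    exists y, [/\ List.In y s, ~ U y & dY y z < E y].
Proof.
move=> cY oU E_gt0.
pose W (i : option Y) : set Y :=
  if i is Some y then fun z => ~ U y /\ dY y z < E y else U.
have oW i : mopen dY (W i).
  case: i => [y|] //= z [nUy yz].
  have [e e_gt0 sub] := mopen_ball yz.
  by exists e => // w /sub.
have coverW z : exists i, W i z.
  have [Uz|nUz] := pselect (U z); first by exists None.
  by exists (Some z); rewrite /= mdist_xx.
have [s cover_s] := cY _ W oW coverW.
exists (List.flat_map (fun i => if i is Some y then [:: y] else [::]) s).
move=> z nUz; have [[y|] [s_y Wy]] := cover_s z; last by [].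
case: Wy => nUy yz; exists y; split => //.
by apply/List.in_flat_map; exists (Some y); split => //; left.
Qed.

Definition rel_closed (X Y : Type) (dX : metric X) (dY : metric Y)
    (D : set (X * Y)) : Prop :=
  forall x y, ~ D (x, y) -> exists2 e : R, 0 < e &
    forall x' y', dX x x' < e -> dY y y' < e -> ~ D (x', y').

Lemma rel_closed_swap (X Y : Type) (dX : metric X) (dY : metric Y)
    (D : set (X * Y)) :
  rel_closed dX dY D -> rel_closed dY dX [set p | D (p.2, p.1)].
Proof.
move=> clD y x /clD [e e_gt0 nD]; exists e => // y' x' yy' xx'; exact: nD.
Qed.

Lemma usc_rel_closed (X Y : Type) (dX : metric X) (dY : metric Y)
    (D : set (X * Y)) :
  mcompact dY -> rel_closed dX dY D -> usc dX dY (corr_map D).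
Proof.
move=> cY clD x U oU Dx_sub.
have sep y : exists e : R, 0 < e /\
    (~ U y -> forall x' y', dX x x' < e -> dY y y' < e -> ~ D (x', y')).
  have [Uy|nUy] := pselect (U y); first by exists 1.
  have [|e e_gt0 nD] := clD x y; first by move=> /Dx_sub.
  by exists e.
have [E E_sep] := choice sep.
have E_gt0 y : 0 < E y by case: (E_sep y).
have [s cover_s] := mcompact_cover_compl cY oU E_gt0.
have [d d_gt0 le_d] := finite_pos_lower_bound s E_gt0.
exists (fun x' => dX x x' < d); split; first exact: mopen_ball.
  by rewrite mdist_xx.
move=> x' xx' y' Dx'y'; apply: contrapT => nUy'.
have [y [s_y nUy yy']] := cover_s y' nUy'.
apply: (proj2 (E_sep y) nUy x' y') => //; have := le_d y s_y; lra.
Qed.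

Section Closure.
Variables (X Y : Type) (dX : metric X) (dY : metric Y).

Definition rel_closure (C : set (X * Y)) : set (X * Y) :=
  fun p => forall e : R, 0 < e ->
    exists q, C q /\ dX p.1 q.1 < e /\ dY p.2 q.2 < e.

Lemma subset_rel_closure C : C `<=` rel_closure C.
Proof. by move=> p Cp e e_gt0; exists p; rewrite !mdist_xx. Qed.

Lemma rel_closure_closed C : rel_closed dX dY (rel_closure C).
Proof.
move=> x y /existsNP [e /not_implyP [e_gt0 /forallNP farC]].
exists (e / 2); first lra.
move=> x' y' xx' yy' /(_ (e / 2)) [|q [Cq [x'q y'q]]]; first lra.
apply: (farC q); split => //=.
by have := mdist_tri dX x x' q.1; have := mdist_tri dY y y' q.2; lra.
Qed.

Lemma correspondence_rel_closure C :
  correspondence C -> correspondence (rel_closure C).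
Proof.
case=> [Cx Cy]; split=> [x|y].
- by have [y Cxy] := Cx x; exists y; apply: subset_rel_closure.
- by have [x Cxy] := Cy y; exists x; apply: subset_rel_closure.
Qed.

Lemma correspondence_us_rel_closure C :
  mcompact dX -> mcompact dY ->
  correspondence C -> correspondence_us dX dY (rel_closure C).
Proof.
move=> cX cY corC; split; first exact: correspondence_rel_closure.
- exact/usc_rel_closed/rel_closure_closed.
- apply: (usc_rel_closed (D := [set p | rel_closure C (p.2, p.1)]) cX).
  exact/rel_closed_swap/rel_closure_closed.
Qed.

Lemma dis_rel_closure C : (dis dX dY (rel_closure C) <= dis dX dY C)%E.
Proof.
apply: ge_ereal_sup => _ [p [q [Cp [Cq ->]]]].
apply/lee_addgt0Pr => e e_gt0.
have [a [Ca [pa1 pa2]]] := Cp (e / 4) ltac:(lra).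
have [b [Cb [qb1 qb2]]] := Cq (e / 4) ltac:(lra).
have dis_ab : (`|dX a.1 b.1 - dY a.2 b.2|%:E <= dis dX dY C)%E.
  by apply: ereal_sup_ubound; exists a, b.
apply: le_trans (leeD2r _ dis_ab); rewrite -EFinD lee_fin.
move: (mdist_sub_le dX p.1 q.1 a.1 b.1) (mdist_sub_le dY p.2 q.2 a.2 b.2).
rewrite !ler_norml => /andP[? ?] /andP[? ?].
have := ler_norm (dX a.1 b.1 - dY a.2 b.2).
have := ler_norm (- (dX a.1 b.1 - dY a.2 b.2)); rewrite normrN => *.
by apply/andP; split; lra.
Qed.

End Closure.

Theorem mainTheorem5 (X Y : Type) (dX : metric X) (dY : metric Y) :
  (exists x : X, True) -> (exists y : Y, True) ->
  mcompact dX -> mcompact dY ->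
  dGH_us dX dY = dGH dX dY.
Proof.
move=> _ _ cX cY; rewrite /dGH_us /dGH; congr (_ * _)%E.
apply/eqP; rewrite eq_le; apply/andP; split.
- apply: le_ereal_inf_tmp => _ [C corC <-].
  apply: le_trans (dis_rel_closure dX dY C).
  apply: ereal_inf_lbound; exists (rel_closure dX dY C) => //.
  exact: correspondence_us_rel_closure.
- by apply: ereal_inf_le_tmp => _ [C [corC _ _] <-]; exists C.
Qed.
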